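(* Let $X=(X,d,\mathcal M,\mu)$ be a metric measure space and $1\le p<\infty$. Let $a\in X_0$ be such that for every $\lambda>0$, $B(a,\lambda)\in\mathcal M$ and $\mu(B(a,\lambda))>0$, and $\mu(B(a,\lambda'))<\infty$ for some $\lambda'>0$. Suppose that $A\subset L^p(X)$ and $\xi:A\to(0,\infty)$ is a function such that every $f\in A$ satisfies $f(x)=0$ for almost every $x\in B(a,\xi(f))$, and that $B$ is a $Z$-set in $L^p(X)$. If $A\cup B$ is closed in $L^p(X)$, then $A\cup B$ is a $Z$-set in $L^p(X)$.
   Context: A metric measure space $X=(X,d,\mathcal M,\mu)$ consists of a metric space $(X,d)$, a $\sigma$-algebra $\mathcal M$ and a measure $\mu$ on $\mathcal M$. $X_0=\{x\in X:\{x\}\in\mathcal M,\ \mu(\{x\})=0\}$, $B(a,\lambda)=\{x:d(a,x)<\lambda\}$. $L^p(X)$ is the Banach space of $\mathcal M$-measurable $f:X\to\mathbb R$ with $\|f\|_p=(\int_X|f|^pd\mu)^{1/p}<\infty$, modulo a.e. equality. For maps $f,g:Z\to M$ and an open cover $\mathcal U$ of $M$, $f$ is $\mathcal U$-close to $g$ if for each $z$ some $U\in\mathcal U$ contains $\{f(z),g(z)\}$. A closed set $A$ in a space $M$ is a $Z$-set if for every open cover $\mathcal U$ of $M$ there is a continuous $f:M\to M$ that is $\mathcal U$-close to the identity with $f(M)\cap A=\emptyset$. *)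

From HB Require Import structures.
From mathcomp Require Import all_boot all_order all_algebra.
From mathcomp Require Import all_classical all_reals all_analysis.
Set Implicit Arguments. Unset Strict Implicit. Unset Printing Implicit Defensive.
Import Order.TTheory GRing.Theory Num.Theory.
Import numFieldNormedType.Exports.
Local Open Scope classical_set_scope.
Local Open Scope ring_scope.

Definition is_metric (R : realType) (T : Type) (dist : T -> T -> R) : Prop :=
  (forall x y, 0 <= dist x y) /\
  (forall x y, dist x y = 0 <-> x = y) /\
  (forall x y, dist x y = dist y x) /\
  (forall x y z, dist x z <= dist x y + dist y z).

Definition mball (R : realType) (T : Type) (dist : T -> T -> R) (a : T) (lam : R)
  : set T := [set x | dist a x < lam].

Definition X0 d (T : measurableType d) (R : realType)
  (mu : {measure set T -> \bar R}) : set T :=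
  [set x | measurable [set x] /\ mu [set x] = 0%E].

Definition Lpdist d (T : measurableType d) (R : realType)
  (mu : {measure set T -> \bar R}) (p : R) (p1 : (1 <= p%:E)%E)
  (F G : LspaceType mu p1) : R :=
  fine ('N[mu]_(p%:E)[EFin \o (fun x => ((F : T -> R) x - (G : T -> R) x)%R)])%E.

Section MetricTopology.
Context (R : realType) (M : Type) (dist : M -> M -> R).

Definition mopen (U : set M) : Prop :=
  forall x, U x -> exists2 e : R, 0 < e & forall y, dist x y < e -> U y.

Definition mclosed (S : set M) : Prop := mopen (~` S).

Definition mcontinuous (f : M -> M) : Prop :=
  forall x (e : R), 0 < e -> exists2 del : R, 0 < del &
    forall y, dist x y < del -> dist (f x) (f y) < e.

Definition open_cover (UU : set (set M)) : Prop :=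
  (forall U, UU U -> mopen U) /\ (forall x, exists2 U, UU U & U x).

Definition cover_close (UU : set (set M)) (f g : M -> M) : Prop :=
  forall z, exists2 U, UU U & (U (f z) /\ U (g z)).

Definition Zset (A : set M) : Prop :=
  mclosed A /\
  forall UU, open_cover UU ->
    exists f : M -> M, [/\ mcontinuous f, cover_close UU f id &
                           f @` setT `&` A = set0].
End MetricTopology.

From HB Require Import structures.
From mathcomp Require Import all_boot all_order all_algebra.
From mathcomp Require Import all_classical all_reals all_analysis.
From mathcomp Require Import measurable_realfun lra ring.
Import Order.TTheory GRing.Theory Num.Theory.
Import numFieldNormedType.Exports.

Set Implicit Arguments.
Unset Strict Implicit.
Unset Printing Implicit Defensive.
Local Open Scope classical_set_scope.
Local Open Scope ring_scope.

(* Given an open cover, the Z-set property of B gives a continuous g that avoids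
   B and is close to the identity.  With eps z built from the Lebesgue numbers
   of the cover at z and of the open set ~` B at g z, every continuous F with
   dist (g z) (F z) < eps z still avoids B and is close to the identity, so it
   remains to move each g z by less than eps z off A, continuously in z.
   Near a, g z is replaced by a nonzero constant.  As mu has no atom at a, the
   tails || g z * 1_(B(a, lam / n)) ||_p tend to 0, so doing this on the balls
   where the tail is small costs less than eps z; as every ball around a has
   positive measure, the result does not vanish a.e. near a and is not in A.
   For continuity in z, the switch is made shell by shell, with weights that
   depend Lipschitz-continuously on the tail norms and on eps z. *)

(** * p-norms of real-valued functions *)

Section pnorm.
Context {d} {T : measurableType d} {R : realType} {mu : {measure set T -> \bar R}}.
Context {p : R}.
Hypothesis p1 : 1 <= p.

Definition pnorm (f : T -> R) : \bar R := 'N[mu]_p%:E[EFin \o f].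
Definition pnormr (f : T -> R) : R := fine (pnorm f).
Definition pfinite (f : T -> R) : Prop :=
  measurable_fun setT f /\ (pnorm f < +oo)%E.

Let p_gt0 : 0 < p. Proof. exact: lt_le_trans ltr01 p1. Qed.

Lemma measurable_powR_norm (f : T -> R) : measurable_fun setT f ->
  measurable_fun setT (fun x => ((`|f x| `^ p)%:E : \bar R)).
Proof.
move=> mf; apply/measurable_EFinP.
apply: (@measurableT_comp _ _ _ _ _ _ (@powR R ^~ p)); first exact: measurable_powR.
exact: measurableT_comp.
Qed.

Lemma pnormE (f : T -> R) : pnorm f = ((\int[mu]_x (`|f x| `^ p)%:E) `^ p^-1)%E.
Proof. by rewrite /pnorm unlock. Qed.

Lemma pnorm_ge0 (f : T -> R) : (0 <= pnorm f)%E.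
Proof. exact: Lnorm_ge0. Qed.

Lemma le_pnorm (f g : T -> R) : measurable_fun setT f -> measurable_fun setT g ->
  (forall x, `|f x| <= `|g x|) -> (pnorm f <= pnorm g)%E.
Proof.
move=> mf mg fg; rewrite !pnormE.
have int_ge0 h : (0 <= \int[mu]_x (`|h x| `^ p)%:E)%E.
  by apply: integral_ge0 => x _; rewrite lee_fin powR_ge0.
apply: gt0_ler_poweR; rewrite ?invr_ge0 ?(ltW p_gt0) ?in_itv /= ?leey ?int_ge0 //.
apply: ge0_le_integral => //; try exact: measurable_powR_norm.
by move=> x _; rewrite lee_fin; apply: ge0_ler_powR; rewrite ?nnegrE ?(ltW p_gt0).
Qed.

Lemma pnorm_ae (f g : T -> R) : measurable_fun setT f -> measurable_fun setT g ->
  {ae mu, forall x, f x = g x} -> pnorm f = pnorm g.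
Proof.
move=> mf mg fg; rewrite !pnormE; congr (_ `^ _)%E.
apply: ae_eq_integral => //; try exact: measurable_powR_norm.
by apply: filterS fg => x /= -> _.
Qed.

Lemma pnormZ (k : R) (f : T -> R) : measurable_fun setT f ->
  pnorm (fun x => k * f x) = (`|k|%:E * pnorm f)%E.
Proof.
move=> mf; rewrite !pnormE.
under eq_integral do rewrite normrM powRM // EFinM.
rewrite ge0_integralZl_EFin //; try (by move=> x _; rewrite lee_fin powR_ge0);
  try exact: measurable_powR_norm; try exact: powR_ge0.
rewrite poweRM //; last by rewrite integral_ge0 // => x _; rewrite lee_fin powR_ge0.
by rewrite poweR_EFin -powRrM mulfV ?gt_eqF // powRr1.
Qed.

Lemma pnorm_indic (S : set T) : measurable S -> pnorm (\1_S) = (mu S `^ p^-1)%E.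
Proof.
move=> mS; rewrite pnormE -[in RHS](setIT S) -integral_indic //; congr (_ `^ _)%E.
apply: eq_integral => x _; rewrite /indic; case: (x \in S) => /=.
- by rewrite normr1 powR1.
- by rewrite normr0 powR0 // gt_eqF.
Qed.

Lemma pnormD (f g : T -> R) : measurable_fun setT f -> measurable_fun setT g ->
  (pnorm (fun x => (f x + g x)%R) <= pnorm f + pnorm g)%E.
Proof. by move=> mf mg; exact: minkowski_EFin. Qed.

Lemma pnormrE (f : T -> R) : pfinite f -> (pnormr f)%:E = pnorm f.
Proof. by move=> [_ ff]; rewrite /pnormr fineK // ge0_fin_numE // pnorm_ge0. Qed.

Lemma pnormr_ge0 (f : T -> R) : 0 <= pnormr f.
Proof. by rewrite /pnormr fine_ge0 // pnorm_ge0. Qed.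

Lemma pfinite_le (f g : T -> R) : measurable_fun setT f -> pfinite g ->
  (forall x, `|f x| <= `|g x|) -> pfinite f.
Proof.
by move=> mf [mg fg] le; split => //; exact: le_lt_trans (le_pnorm mf mg le) fg.
Qed.

Lemma le_pnormr (f g : T -> R) : measurable_fun setT f -> pfinite g ->
  (forall x, `|f x| <= `|g x|) -> pnormr f <= pnormr g.
Proof.
move=> mf fg le; rewrite -lee_fin !pnormrE //; last exact: pfinite_le fg le.
by case: fg => mg _; exact: le_pnorm.
Qed.

Lemma pfiniteD (f g : T -> R) : pfinite f -> pfinite g -> pfinite (fun x => f x + g x).
Proof.
move=> [mf ff] [mg fg]; split; first exact: measurable_funD.
by apply: le_lt_trans (pnormD mf mg) _; rewrite lte_add_pinfty.
Qed.

Lemma pnormrD (f g : T -> R) : pfinite f -> pfinite g ->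
  pnormr (fun x => f x + g x) <= pnormr f + pnormr g.
Proof.
move=> ff fg; rewrite -lee_fin EFinD !pnormrE //; last exact: pfiniteD.
by case: ff => mf _; case: fg => mg _; exact: pnormD.
Qed.

Lemma pfiniteZ (k : R) (f : T -> R) : pfinite f -> pfinite (fun x => k * f x).
Proof.
move=> [mf ff]; split; first exact: measurable_funM.
by rewrite pnormZ // lte_mul_pinfty.
Qed.

Lemma pnormrZ (k : R) (f : T -> R) : pfinite f ->
  pnormr (fun x => k * f x) = `|k| * pnormr f.
Proof.
move=> ff; apply: EFin_inj; rewrite EFinM !pnormrE //; last exact: pfiniteZ.
by case: ff => mf _; rewrite pnormZ.
Qed.

Lemma pnormr_ae (f g : T -> R) : measurable_fun setT f -> measurable_fun setT g ->
  {ae mu, forall x, f x = g x} -> pnormr f = pnormr g.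
Proof. by move=> mf mg fg; rewrite /pnormr (pnorm_ae mf mg fg). Qed.

Lemma pfiniteB (f g : T -> R) : pfinite f -> pfinite g -> pfinite (fun x => f x - g x).
Proof.
move=> ff fg; apply: pfiniteD => //.
by have := pfiniteZ (-1) fg; congr pfinite; apply: funext => x; rewrite mulN1r.
Qed.

Lemma pnormrB (f g : T -> R) : pfinite f -> pfinite g ->
  pnormr (fun x => f x - g x) = pnormr (fun x => g x - f x).
Proof.
move=> ff fg; rewrite -[RHS]mul1r -(normrN1 R) -pnormrZ; last exact: pfiniteB.
by congr pnormr; apply: funext => x; rewrite mulN1r opprB.
Qed.

Lemma pnormrB_le (f g h : T -> R) : pfinite f -> pfinite g -> pfinite h ->
  pnormr (fun x => f x - h x) <=
  pnormr (fun x => f x - g x) + pnormr (fun x => g x - h x).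
Proof.
move=> ff fg fh.
have -> : (fun x => f x - h x) = (fun x => (f x - g x) + (g x - h x)).
  by apply: funext => x; rewrite addrA subrK.
by apply: pnormrD; apply: pfiniteB.
Qed.

Lemma pnormrB_leD (f g : T -> R) : pfinite f -> pfinite g ->
  pnormr (fun x => f x - g x) <= pnormr f + pnormr g.
Proof.
move=> ff fg; rewrite -[pnormr g]mul1r -(normrN1 R) -pnormrZ //.
have -> : (fun x => f x - g x) = (fun x => f x + (-1) * g x).
  by apply: funext => x; rewrite mulN1r.
by apply: pnormrD => //; exact: pfiniteZ.
Qed.

Lemma pnormr0 : pnormr (fun=> 0) = 0.
Proof.
by rewrite /pnormr /pnorm (_ : _ \o _ = cst 0%E) ?Lnorm0 // gt_eqF // lte_fin.
Qed.

Lemma pfinite_indic (S : set T) : measurable S -> (mu S < +oo)%E -> pfinite (\1_S).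
Proof.
move=> mS muS; split; first exact: measurable_indic.
by rewrite pnorm_indic // poweR_lty.
Qed.

Lemma pfinite_abs (f : T -> R) : pfinite f -> pfinite (fun x => `|f x|).
Proof.
move=> ff; apply: (pfinite_le _ ff); last by move=> x; rewrite normr_id.
by case: ff => mf _; exact: measurableT_comp.
Qed.

Lemma pnormr_abs (f : T -> R) : pnormr (fun x => `|f x|) = pnormr f.
Proof. by rewrite /pnormr /pnorm -[in RHS]Lnorm_abse; congr fine; apply: eq_Lnorm. Qed.

Lemma pnormr_lt (f : T -> R) (eta : R) : 0 < eta ->
  (\int[mu]_x (`|f x| `^ p)%:E < (eta `^ p)%:E)%E -> pnormr f < eta.
Proof.
move=> eta0; rewrite /pnormr pnormE.
have : (0 <= \int[mu]_x (`|f x| `^ p)%:E)%E.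
  by apply: integral_ge0 => x _; rewrite lee_fin powR_ge0.
case: (\int[mu]_x _)%E => [i||] //= i0; rewrite lte_fin => ilt.
rewrite -[ltRHS](powRr1 (ltW eta0)) -(mulfV (lt0r_neq0 p_gt0)) powRrM.
by rewrite gt0_ltr_powR ?invr_gt0 ?nnegrE ?powR_ge0.
Qed.

Lemma norm_mul_indic_le (f : T -> R) (S : set T) x : `|f x * \1_S x| <= `|f x|.
Proof.
by rewrite normrM /indic; case: (x \in S); rewrite ?normr1 ?normr0 ?mulr1 ?mulr0.
Qed.

Lemma pfinite_mul_indic (f : T -> R) (S : set T) : measurable S -> pfinite f ->
  pfinite (fun x => f x * \1_S x).
Proof.
move=> mS ff; apply: (pfinite_le _ ff); last exact: norm_mul_indic_le.
by case: ff => mf _; apply: measurable_funM => //; exact: measurable_indic.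
Qed.

End pnorm.
Arguments pnorm {d T R} mu p f.
Arguments pnormr {d T R} mu p f.
Arguments pfinite {d T R} mu p f.

Section Lp_elements.
Context {d} {T : measurableType d} {R : realType} (mu : {measure set T -> \bar R}).
Context {p : R} (p1 : (1 <= p%:E)%E).
Local Notation Lp := (LspaceType mu p1).
Local Notation dist := (@Lpdist d T R mu p p1).

Lemma Lp_exponent_ge1 : 1 <= p. Proof. by rewrite -lee_fin. Qed.

Lemma pfinite_Lp (F : Lp) : pfinite mu p F.
Proof.
split; last exact: Lebesgue_finite.
exact: (measurable_funPT (repr (LebesgueSpace.sort F))).
Qed.

Section Lp_of.
Local Open Scope quotient_scope.
Context (f : T -> R) (hf : pfinite mu p f).

Let f_mfun : {mfun T >-> measurableTypeR R} :=
  @mfun_Sub _ _ T (measurableTypeR R) f (ltac:(by rewrite inE; case: hf)).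
Let q : {mfun_ mu, T >-> measurableTypeR R} := \pi f_mfun.

Let q_ae : {ae mu, forall x, (q : T -> R) x = f x}.
Proof.
have /asboolP : ae_eq_op mu (repr q) f_mfun by rewrite -eqmodE reprK.
by apply: filterS => x /(_ I).
Qed.

Let q_finite : finite_norm mu p%:E (q : T -> R).
Proof.
have mq : measurable_fun setT (q : T -> R) by exact: (measurable_funPT (repr q)).
by have := pnorm_ae mq hf.1 q_ae; rewrite /finite_norm /pnorm => ->; case: hf.
Qed.

Definition Lp_of : Lp :=
  @LebesgueSpace.Pack d T R mu p%:E p1 q
    (LebesgueSpace.Class (isFinLebesgue.Build d T R mu p%:E p1 q q_finite)).

Lemma Lp_of_ae : {ae mu, forall x, (Lp_of : T -> R) x = f x}.
Proof. exact: q_ae. Qed.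

End Lp_of.

Lemma Lpdist_ge0 (F G : Lp) : 0 <= dist F G.
Proof. exact: pnormr_ge0. Qed.

Lemma Lpdist_sym (F G : Lp) : dist F G = dist G F.
Proof. by have := pnormrB Lp_exponent_ge1 (pfinite_Lp F) (pfinite_Lp G). Qed.

Lemma Lpdist_triangle (F G H : Lp) : dist F H <= dist F G + dist G H.
Proof.
by have := pnormrB_le Lp_exponent_ge1 (pfinite_Lp F) (pfinite_Lp G) (pfinite_Lp H).
Qed.

Lemma Lpdist_refl (F : Lp) : dist F F = 0.
Proof.
rewrite /Lpdist (_ : (fun x => _ - _) = fun=> 0); last by apply: funext => x; rewrite subrr.
by have := pnormr0 (mu := mu) Lp_exponent_ge1.
Qed.

Lemma Lpdist_ae (F G : Lp) (h : T -> R) : measurable_fun setT h ->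
  {ae mu, forall x, (F : T -> R) x - (G : T -> R) x = h x} -> dist F G = pnormr mu p h.
Proof.
move=> mh Fh; apply: pnormr_ae => //.
by apply: measurable_funB; [exact: (pfinite_Lp F).1 | exact: (pfinite_Lp G).1].
Qed.

End Lp_elements.

(** * Lebesgue numbers of open covers and Z-sets *)

Lemma ler_dist_min {R : realType} (x y x' y' : R) :
  `|Num.min x y - Num.min x' y'| <= `|x - x'| + `|y - y'|.
Proof.
have := ler_norm (x - x'); have := ler_norm (y - y').
rewrite (distrC x) (distrC y); have := ler_norm (x' - x); have := ler_norm (y' - y).
rewrite ler_norml /Num.min; repeat case: ifPn; rewrite ?ltNge ?negbK => *;
  apply/andP; split; lra.
Qed.

Section metric.
Context {R : realType} {M : Type} (dist : M -> M -> R).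
Hypothesis dist_ge0 : forall x y, 0 <= dist x y.
Hypothesis dist_sym : forall x y, dist x y = dist y x.
Hypothesis dist_triangle : forall x y z, dist x z <= dist x y + dist y z.
Hypothesis dist_refl : forall x, dist x x = 0.

Definition rcontinuous (phi : M -> R) : Prop :=
  forall z e, 0 < e -> exists2 del, 0 < del &
    forall z', dist z z' < del -> `|phi z - phi z'| < e.

Lemma lipschitz_rcontinuous (phi : M -> R) :
  (forall z z', `|phi z - phi z'| <= dist z z') -> rcontinuous phi.
Proof. by move=> phi_lip z e e0; exists e => // z' /(le_lt_trans (phi_lip z z')). Qed.

Lemma rcontinuous_comp (g : M -> M) (phi : M -> R) :
  mcontinuous dist g -> rcontinuous phi -> rcontinuous (phi \o g).
Proof.
move=> gc phic z e /(phic (g z)) [del del0 hdel].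
by have [eta eta0 heta] := gc z del del0; exists eta => // z' /heta /hdel.
Qed.

Lemma rcontinuous_min (phi psi : M -> R) :
  rcontinuous phi -> rcontinuous psi -> rcontinuous (fun z => Num.min (phi z) (psi z)).
Proof.
move=> phic psic z e e0; have e20 : 0 < e / 2 by rewrite divr_gt0.
have [d1 d10 hd1] := phic z _ e20; have [d2 d20 hd2] := psic z _ e20.
exists (Num.min d1 d2) => [|z']; first by rewrite lt_min d10 d20.
rewrite lt_min => /andP[/hd1 h1 /hd2 h2].
by apply: le_lt_trans (ler_dist_min _ _ _ _) _; lra.
Qed.

Lemma mcontinuous_modulus (f : M -> M) (s : M -> M -> R) :
  (forall z z', 0 <= s z z') ->
  (forall z e, 0 < e -> exists2 del, 0 < del & forall z', dist z z' < del -> s z z' < e) ->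
  (forall z, exists2 r, 0 < r & exists C, forall z', s z z' < r ->
     dist (f z) (f z') <= C * s z z') ->
  mcontinuous dist f.
Proof.
move=> s_ge0 s_cvg f_bound z e e0.
have [r r0 [C hC]] := f_bound z.
have C1 : 0 < `|C| + 1 by rewrite ltr_wpDl.
pose t := Num.min r (e / (`|C| + 1)).
have [del del0 hdel] := s_cvg z t (ltac:(by rewrite lt_min r0 divr_gt0)).
exists del => // z' /hdel; rewrite lt_min => /andP[sr se].
apply: le_lt_trans (hC z' sr) _; apply: le_lt_trans (ler_norm _) _.
rewrite normrM (ger0_norm (s_ge0 z z')).
apply: le_lt_trans (_ : `|C| * s z z' <= (`|C| + 1) * s z z') _.
  by rewrite ler_wpM2r // lerDl.
by rewrite -ltr_pdivlMl // mulrC.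
Qed.

Definition cover_radii (UU : set (set M)) (z : M) : set R :=
  [set r | 0 <= r <= 1 /\ exists2 U, UU U & forall y, dist z y < r -> U y].

(* The Lebesgue number of the cover UU at z, truncated at 1 so that it is finite. *)
Definition cover_radius (UU : set (set M)) (z : M) : R := sup (cover_radii UU z).

Section cover_radius.
Variable UU : set (set M).
Hypothesis UU_neq0 : UU !=set0.

Let cover_radii0 z : cover_radii UU z 0.
Proof.
case: UU_neq0 => U UU_U; split; first by rewrite lexx ler01.
by exists U => // y; rewrite ltNge dist_ge0.
Qed.

Let has_sup_cover_radii z : has_sup (cover_radii UU z).
Proof. by split; [exists 0 | exists 1 => r [/andP[_ ->]]]. Qed.

Lemma cover_radius_ge0 z : 0 <= cover_radius UU z.
Proof. exact: sup_upper_bound (has_sup_cover_radii z) _ (cover_radii0 z). Qed.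

Lemma cover_radius_ball z r : r < cover_radius UU z ->
  exists2 U, UU U & forall y, dist z y < r -> U y.
Proof.
rewrite -subr_gt0 => rz.
have [s [_ [U UU_U hU]]] := sup_adherent rz (has_sup_cover_radii z).
rewrite opprB addrCA subrr addr0 => rs.
by exists U => // y hy; apply/hU/(lt_trans hy).
Qed.

Lemma cover_radius_gt0 z U : UU U -> mopen dist U -> U z -> 0 < cover_radius UU z.
Proof.
move=> UU_U /(_ z) oU /oU[e e0 he].
apply: (@lt_le_trans _ _ (Num.min e 1)); first by rewrite lt_min e0 ltr01.
apply: sup_upper_bound; first exact: has_sup_cover_radii.
split; first by rewrite ge_min lexx orbT le_min (ltW e0) ler01.
by exists U => // y hy; apply/he/(lt_le_trans hy); rewrite ge_min lexx.
Qed.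

Lemma cover_radius_lip z z' : cover_radius UU z - dist z z' <= cover_radius UU z'.
Proof.
rewrite lerBlDr; apply: ge_sup; first by exists 0.
move=> r [/andP[r0 r1] [U UU_U hU]].
have [le|lt] := leP r (dist z z').
  by apply: le_trans le _; rewrite lerDr cover_radius_ge0.
rewrite -lerBlDr; apply: sup_upper_bound; first exact: has_sup_cover_radii.
split; first by rewrite subr_ge0 (ltW lt) /= lerBlDr (le_trans r1) // lerDl.
exists U => // y hy; apply: hU.
by apply: le_lt_trans (dist_triangle z z' y) _; rewrite -ltrBrDl.
Qed.

End cover_radius.

Lemma dist_cover_radius UU z z' :
  `|cover_radius UU z - cover_radius UU z'| <= dist z z'.
Proof.
have [UU0|UU0] := pselect (UU !=set0); last first.
  have radii0 y : cover_radii UU y = set0.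
    by apply/seteqP; split => // r [_ [U UU_U _]]; apply: UU0; exists U.
  by rewrite /cover_radius !radii0 sup0 subrr normr0.
have := cover_radius_lip UU0 z z'; have := cover_radius_lip UU0 z' z.
by rewrite dist_sym ler_norml => *; apply/andP; split; lra.
Qed.

Lemma cover_radius1 (U : set M) z y :
  dist z y < cover_radius [set U] z -> U y.
Proof.
move=> zy; have r_lt : (dist z y + cover_radius [set U] z) / 2 < cover_radius [set U] z.
  by rewrite ltr_pdivrMr //; lra.
have [_ -> hU] := cover_radius_ball (ex_intro _ U erefl) r_lt.
by apply: hU; rewrite ltr_pdivlMr //; lra.
Qed.

Lemma open_cover_balls (r : M -> R) : (forall w, 0 < r w) ->
  open_cover dist [set [set y | dist w y < r w] | w in setT].
Proof.
move=> r0; split=> [_ [w _ <-] y /= wy|x]; last first.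
  by exists [set y | dist x y < r x]; [exists x | rewrite /= dist_refl].
exists (r w - dist w y); first by rewrite subr_gt0.
by move=> y' yy'; have := dist_triangle w y y'; rewrite /=; lra.
Qed.

Lemma cover_close_perturb (UU : set (set M)) (g F : M -> M) : open_cover dist UU ->
  cover_close [set [set y | dist w y < cover_radius UU w / 4] | w in setT] g id ->
  (forall z, dist (g z) (F z) < cover_radius UU z / 8) ->
  cover_close UU F id.
Proof.
move=> [_ UUc] gclose gF z.
have UU0 : UU !=set0 by have [U ? _] := UUc z; exists U.
have [_ [w _ <-] [/= wgz wz]] := gclose z.
have := dist_cover_radius UU z w; rewrite ler_norml [dist z w]dist_sym => /andP[_ rzw].
have wz0 := dist_ge0 w z; have gFz := gF z; have tri := dist_triangle w (g z) (F z).
have [|U UU_U hU] := @cover_radius_ball UU UU0 w (cover_radius UU w / 2); first lra.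
by exists U => //; split; apply: hU; lra.
Qed.

Lemma Zset_setU (A B : set M) : Zset dist B -> mclosed dist (A `|` B) ->
  (forall (g : M -> M) (eps : M -> R), mcontinuous dist g -> (forall z, 0 < eps z) ->
     rcontinuous eps ->
     exists2 F : M -> M, mcontinuous dist F &
       forall z, dist (g z) (F z) < eps z /\ ~ A (F z)) ->
  Zset dist (A `|` B).
Proof.
move=> [Bcl BZ] ABcl push_off; split => // UU UUcov.
pose rU := cover_radius UU; pose rB := cover_radius [set ~` B].
have rU_gt0 z : 0 < rU z.
  case: UUcov => UUo /(_ z)[U UU_U Uz].
  exact: (cover_radius_gt0 (ex_intro _ U UU_U) UU_U (UUo U UU_U)).
have [|g [gc gclose gB]] := BZ _ (@open_cover_balls (fun w => rU w / 4) _).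
  by move=> w; rewrite divr_gt0.
have ngB z : ~ B (g z).
  by move=> Bgz; suff : (g @` setT `&` B) (g z) by rewrite gB.
have rB_gt0 z : 0 < rB (g z).
  by apply: (cover_radius_gt0 (ex_intro _ _ erefl) erefl Bcl); exact: ngB.
have lip8 (UU' : set (set M)) z z' :
    `|cover_radius UU' z / 8 - cover_radius UU' z' / 8| <= dist z z'.
  rewrite -mulrBl normrM (ger0_norm (_ : 0 <= 8^-1 :> R)) //.
  have := dist_cover_radius UU' z z'; have := dist_ge0 z z'; lra.
pose eps z := Num.min (rU z / 8) (rB (g z) / 8).
have [||F Fc hF] := push_off g eps gc.
- by move=> z; rewrite lt_min !divr_gt0.
- apply: rcontinuous_min; last apply: (rcontinuous_comp (phi := fun y => rB y / 8) gc);
    by apply: lipschitz_rcontinuous => z z'; exact: lip8.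
exists F; split => //.
  apply: cover_close_perturb gclose _ => // z.
  by apply: lt_le_trans (hF z).1 _; rewrite ge_min lexx.
apply/seteqP; split => // _ [[z _ <-] [/(hF z).2 // | BFz]].
apply: (@cover_radius1 (~` B) (g z)) BFz; apply: lt_trans (hF z).1 _.
by rewrite gt_min -/rB; apply/orP; right; have := rB_gt0 z; lra.
Qed.

End metric.

(** * Shells around a point *)

Section shells.
Context {d} {X : measurableType d} {R : realType} (dist : X -> X -> R).
Hypothesis dist_metric : is_metric dist.
Variables (a : X) (lam : R).
Hypothesis lam_gt0 : 0 < lam.
Hypothesis measurable_mball : forall r, 0 < r -> measurable (mball dist a r).

Definition ball_seq (n : nat) : set X := mball dist a (lam / n.+1%:R).

Lemma measurable_ball_seq n : measurable (ball_seq n).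
Proof. by apply: measurable_mball; rewrite divr_gt0. Qed.

Lemma ball_seq_subset m n : (m <= n)%N -> ball_seq n `<=` ball_seq m.
Proof.
move=> mn x /lt_le_trans; apply; rewrite ler_wpM2l ?(ltW lam_gt0) //.
by rewrite lef_pV2 ?posrE // ler_nat ltnS.
Qed.

Lemma ball_seq_nonmem x : x <> a -> exists k, ~ ball_seq k x.
Proof.
move=> xa; case: dist_metric => d0 [dE _].
have ax : 0 < dist a x.
  by rewrite lt_neqAle d0 andbT; apply/eqP => /esym /dE ax; exact: xa (esym ax).
exists (Num.truncn (lam / dist a x)); rewrite /ball_seq /mball /=; apply/negP.
rewrite -leNgt ler_pdivrMr // mulrC -ler_pdivrMr //.
exact/ltW/truncnS_gt.
Qed.

(* The n > 0 with x in ball_seq n but not in ball_seq n.+1, and 0 when there is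
   none, i.e. when x = a or x lies outside ball_seq 1. *)
Definition shell_index (x : X) : nat :=
  xget 0%N [set n | (0 < n)%N /\ ball_seq n x /\ ~ ball_seq n.+1 x].

Lemma shell_indexP x : (0 < shell_index x)%N ->
  ball_seq (shell_index x) x /\ ~ ball_seq (shell_index x).+1 x.
Proof. by rewrite /shell_index; case: xgetP => [n _ [_ h] | _]. Qed.

Lemma shell_indexE x k : (0 < k)%N -> ball_seq k x -> ~ ball_seq k.+1 x ->
  shell_index x = k.
Proof.
move=> k0 xk xk1; rewrite /shell_index.
case: xgetP => [n _ [_ [xn xn1]] | /(_ k)]; last by case.
have [nk|kn|//] := ltngtP n k.
- by case: (xn1 (ball_seq_subset nk xk)).
- by case: (xk1 (ball_seq_subset kn xn)).
Qed.

Lemma shell_index_ge x N : (0 < N)%N -> ball_seq N x -> x <> a -> (N <= shell_index x)%N.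
Proof.
move=> N0 xN xa; have [k xk] := ball_seq_nonmem xa.
have Nk : (N < k)%N by rewrite ltnNge; apply/negP => kN; case: (xk (ball_seq_subset kN xN)).
suff [n Nn [xn xn1]] : exists2 n, (N <= n)%N & ball_seq n x /\ ~ ball_seq n.+1 x.
  by rewrite (shell_indexE (leq_trans N0 Nn) xn xn1).
elim: k Nk xk => // k IH; rewrite ltnS leq_eqVlt => /orP[/eqP <- | Nk] xk.
  by exists N.
have [xk'|/IH] := pselect (ball_seq k x); [by exists k; rewrite 1?ltnW | exact].
Qed.

Let measurable_shell k : (0 < k)%N -> measurable [set x | shell_index x = k].
Proof.
move=> k0; rewrite (_ : [set x | _] = ball_seq k `\` ball_seq k.+1).
  by apply: measurableD; exact: measurable_ball_seq.
apply/seteqP; split => x /=; last by move=> [xk xk1]; exact: shell_indexE.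
by move=> xk; rewrite -xk; apply: shell_indexP; rewrite xk.
Qed.

Let measurable_shell_index_eq k : measurable [set x | shell_index x = k].
Proof.
case: k => [|k]; last exact: measurable_shell.
rewrite (_ : [set x | _] = ~` \bigcup_i [set x | shell_index x = i.+1]).
  by apply/measurableC/bigcupT_measurable => i; exact: measurable_shell.
apply/seteqP; split => x /=; first by move=> x0 [i _ /=]; rewrite x0.
move=> xshell; apply/eqP; rewrite eqn0Ngt; apply/negP => x0; apply: xshell.
by exists (shell_index x).-1 => //=; rewrite prednK.
Qed.

Lemma measurable_fun_shell_index (phi : nat -> R) :
  measurable_fun setT (fun x => phi (shell_index x)).
Proof.
move=> _ Y mY; rewrite setTI.
rewrite (_ : _ @^-1` Y = \bigcup_i ([set x | shell_index x = i] `&` [set _ | Y (phi i)])).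
  apply: bigcupT_measurable => i.
  apply: measurableI; first exact: measurable_shell_index_eq.
  by have [Yi|nYi] := pselect (Y (phi i)); [rewrite (_ : [set _ | _] = setT) |
    rewrite (_ : [set _ | _] = set0)] => //; apply/seteqP; split.
apply/seteqP; split => x /=; first by move=> Yx; exists (shell_index x).
by move=> [i _ /= [-> Yi]].
Qed.

End shells.

Section ball_seq_norm.
Context {d} {X : measurableType d} {R : realType} {mu : {measure set X -> \bar R}}.
Context {p : R} (p1 : 1 <= p).
Context (dist : X -> X -> R) (dist_metric : is_metric dist) (a : X) (lam : R).
Hypothesis lam_gt0 : 0 < lam.
Hypothesis measurable_mball : forall r, 0 < r -> measurable (mball dist a r).
Hypothesis a_null : measurable [set a] /\ mu [set a] = 0%E.
Local Notation B := (ball_seq dist a lam).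

Let p_gt0 : 0 < p. Proof. exact: lt_le_trans ltr01 p1. Qed.

Lemma pnormr_ball_seq_decr (f : X -> R) m n : pfinite mu p f -> (m <= n)%N ->
  pnormr mu p (fun x => f x * \1_(B n) x) <= pnormr mu p (fun x => f x * \1_(B m) x).
Proof.
move=> ff mn; have mB := measurable_ball_seq lam_gt0 measurable_mball.
apply: (le_pnormr p1 (pfinite_mul_indic p1 (mB n) ff).1 (pfinite_mul_indic p1 (mB m) ff)).
move=> x; rewrite !normrM /indic.
have [xn|_] := boolP (x \in B n); last by rewrite normr0 mulr0 mulr_ge0.
by rewrite (_ : x \in B m) //; apply/mem_set/(ball_seq_subset lam_gt0 mn)/set_mem.
Qed.

(* Dominated convergence: the balls shrink to the null set [set a]. *)
Lemma cvg_integral_ball_seq (f : X -> R) : pfinite mu p f ->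
  (fun n => (\int[mu]_x (`|f x * \1_(B n) x| `^ p)%:E)%E) @ \oo --> 0%E.
Proof.
move=> [mf fNf].
have mB := measurable_ball_seq lam_gt0 measurable_mball.
have ae_neq_a : {ae mu, forall x, x <> a}.
  case: a_null => ma mua; apply: (negligibleS (A := [set a])); last exact/negligibleP.
  by move=> x /= /contrapT ->.
have cvg0 : {ae mu, forall x, setT x ->
    (fun n => (`|f x * \1_(B n) x| `^ p)%:E) @ \oo --> 0%E}.
  apply: filterS ae_neq_a => x xa _.
  have [k xk] := ball_seq_nonmem dist_metric lam xa.
  apply: cvg_near_cst; exists k => // n /= kn.
  rewrite /indic (_ : x \in B n = false) ?mulr0 ?normr0 ?powR0 ?gt_eqF //.
  by apply/negbTE/negP => /set_mem xn; exact: xk (ball_seq_subset lam_gt0 kn xn).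
have integrable_g : mu.-integrable setT (fun x => (`|f x| `^ p)%:E).
  apply/integrableP; split; first exact: measurable_powR_norm.
  under eq_integral do rewrite gee0_abs ?lee_fin ?powR_ge0 //.
  apply: (@lty_poweRy _ _ p^-1); first by rewrite invr_neq0 // gt_eqF.
  by rewrite -pnormE.
have mfn n : measurable_fun setT (fun x => (`|f x * \1_(B n) x| `^ p)%:E).
  by apply/measurable_powR_norm/measurable_funM => //; exact: measurable_indic.
have dom : {ae mu, forall x n, setT x ->
    (`|(`|f x * \1_(B n) x| `^ p)%:E| <= (`|f x| `^ p)%:E)%E}.
  apply: aeW => x n _; rewrite gee0_abs ?lee_fin ?powR_ge0 //.
  by apply: ge0_ler_powR; rewrite ?nnegrE ?(ltW p_gt0) //; exact: norm_mul_indic_le.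
have [_ _] := dominated_convergence measurableT mfn (measurable_cst _) cvg0
  integrable_g dom.
by rewrite integral0.
Qed.

Lemma pnormr_ball_seq_small (f : X -> R) (eta : R) : pfinite mu p f -> 0 < eta ->
  exists N, pnormr mu p (fun x => f x * \1_(B N) x) < eta.
Proof.
move=> ff eta0; have etap0 : (0 < (eta `^ p)%:E)%E by rewrite lte_fin powR_gt0.
have [N _ hN] := cvg_integral_ball_seq ff (open_ereal_lt' etap0).
by exists N; apply: (pnormr_lt p1 eta0); exact: (hN N (leqnn N)).
Qed.

End ball_seq_norm.

(** * Pushing continuous maps off A in L^p *)

Definition clamp01 {R : realType} (t : R) : R := Num.max 0 (Num.min 1 t).

Section clamp01.
Context {R : realType}.
Implicit Types s t : R.

Lemma clamp01_ge0_le1 t : 0 <= clamp01 t <= 1.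
Proof.
rewrite /clamp01 /Num.max /Num.min; repeat case: ifPn; rewrite ?ltNge ?negbK => *;
  apply/andP; split; lra.
Qed.

Lemma clamp01_lip s t : `|clamp01 s - clamp01 t| <= `|s - t|.
Proof.
have := ler_norm (s - t); have := ler_norm (t - s); rewrite distrC.
rewrite ler_norml /clamp01 /Num.max /Num.min; repeat case: ifPn; rewrite ?ltNge ?negbK => *;
  apply/andP; split; lra.
Qed.

Lemma clamp01_neq0 t : clamp01 t != 0 -> 0 < t.
Proof.
rewrite /clamp01 /Num.max /Num.min; repeat case: ifPn; rewrite ?ltNge ?negbK ?eqxx // => *;
  lra.
Qed.

Lemma clamp01_ge1 t : 1 <= t -> clamp01 t = 1.
Proof.
by rewrite /clamp01 /Num.max /Num.min; repeat case: ifPn; rewrite ?ltNge ?negbK => *; lra.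
Qed.

End clamp01.

Lemma ler_distB_div {R : realType} (D D' e e' : R) : 0 < e -> 0 < e' -> 0 <= D' ->
  `|D / e - D' / e'| <= `|D - D'| / e + D' * `|e - e'| / (e * e').
Proof.
move=> e0 e'0 D'0.
have -> : D / e - D' / e' = (D - D') / e + D' * (e' - e) / (e * e').
  by field; apply/andP; split; rewrite gt_eqF.
apply: le_trans (ler_normD _ _) _.
rewrite !normrM !normfV (gtr0_norm e0) (ger0_norm D'0) (gtr0_norm (mulr_gt0 e0 e'0)).
by rewrite [`|e' - e|]distrC.
Qed.

Section push_off.
Context {d} {X : measurableType d} {R : realType} {mu : {measure set X -> \bar R}}.
Context {p : R} (p1 : (1 <= p%:E)%E).
Context (dist : X -> X -> R) (dist_metric : is_metric dist) (a : X).
Hypothesis a_null : measurable [set a] /\ mu [set a] = 0%E.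
Hypothesis measurable_mball : forall r, 0 < r -> measurable (mball dist a r).
Variable lam : R.
Hypothesis lam_gt0 : 0 < lam.
Hypothesis mball_finite : (mu (mball dist a lam) < +oo)%E.
Local Notation Lp := (LspaceType mu p1).
Local Notation dLp := (@Lpdist d X R mu p p1).
Local Notation nr := (pnormr mu p).
Local Notation B := (ball_seq dist a lam).
Local Notation shell := (shell_index dist a lam).
Variables (g : Lp -> Lp) (eps : Lp -> R).
Hypothesis eps_gt0 : forall z, 0 < eps z.

Let p1r : 1 <= p := Lp_exponent_ge1 p1.
Let mB := measurable_ball_seq lam_gt0 measurable_mball.
Let pfinite_g z : pfinite mu p (g z) := pfinite_Lp (g z).

Definition tail_norm (n : nat) (z : Lp) : R := nr (fun x => g z x * \1_(B n) x).
Definition ball_norm : R := nr (\1_(B 0)).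
Definition push_scale : R := (4 * (ball_norm + 1))^-1.
Definition push_const (z : Lp) : R := push_scale * eps z.

(* The weight is 1 on the shells whose tail norm is below eps z / 4 (all shells
   close enough to a) and 0 on those whose tail norm exceeds eps z / 2. *)
Definition push_weight (z : Lp) (x : X) : R :=
  if shell x is n.+1 then clamp01 (2 - 4 * tail_norm n.+1 z / eps z) else 0.

Definition push_fun (z : Lp) (x : X) : R :=
  (1 - push_weight z x) * g z x + push_weight z x * push_const z.

Lemma ball_norm_ge0 : 0 <= ball_norm. Proof. exact: pnormr_ge0. Qed.

Lemma pfinite_indic_ball : pfinite mu p (\1_(B 0)).
Proof.
apply: (pfinite_indic p1r (mB 0)).
by rewrite /ball_seq divr1.
Qed.

Lemma push_scale_gt0 : 0 < push_scale.
Proof. by rewrite invr_gt0 mulr_gt0 // ltr_pwDr // ball_norm_ge0. Qed.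

Lemma push_const_gt0 z : 0 < push_const z.
Proof. by rewrite mulr_gt0 ?push_scale_gt0. Qed.

Lemma push_scale_ball_norm : push_scale * ball_norm <= 4^-1.
Proof.
rewrite /push_scale invfM mulrAC ler_pdivrMr; last by rewrite ltr_pwDr // ball_norm_ge0.
by rewrite mulrDr mulr1 lerDl invr_ge0.
Qed.

Lemma push_weight_ge0_le1 z x : 0 <= push_weight z x <= 1.
Proof.
by rewrite /push_weight; case: shell => [|n]; rewrite ?lexx ?ler01 ?clamp01_ge0_le1.
Qed.

Lemma push_weight_neq0 z x : push_weight z x != 0 ->
  [/\ (0 < shell x)%N, B (shell x) x & tail_norm (shell x) z < eps z / 2].
Proof.
rewrite /push_weight; case E : shell => [|n]; first by rewrite eqxx.
move=> /clamp01_neq0; rewrite subr_gt0 (ltr_pdivrMr _ _ (eps_gt0 z)) => lt2.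
split => //; first by have := @shell_indexP _ _ _ dist a lam x; rewrite E => /(_ isT) [].
by rewrite ltr_pdivlMr //; lra.
Qed.

Lemma push_weight_le_indic z x : push_weight z x <= \1_(B 0) x.
Proof.
have [->|/push_weight_neq0[_ xB _]] := eqVneq (push_weight z x) 0.
  by rewrite /indic; case: (_ \in _).
rewrite /indic (_ : x \in B 0); first by case/andP: (push_weight_ge0_le1 z x).
exact/mem_set/(ball_seq_subset lam_gt0 (leq0n _) xB).
Qed.

Lemma measurable_push_weight z : measurable_fun setT (push_weight z).
Proof.
exact: (measurable_fun_shell_index lam_gt0 measurable_mball
  (fun n => if n is n.+1 then clamp01 (2 - 4 * tail_norm n.+1 z / eps z) else 0)).
Qed.

Lemma pfinite_weight_g z : pfinite mu p (fun x => push_weight z x * g z x).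
Proof.
apply: (pfinite_le p1r _ (pfinite_g z)).
  by apply: measurable_funM; [exact: measurable_push_weight | exact: (pfinite_g z).1].
move=> x; rewrite normrM ler_piMl //; have /andP[w0 w1] := push_weight_ge0_le1 z x.
by rewrite ger0_norm.
Qed.

Lemma pfinite_weight_const z : pfinite mu p (fun x => push_weight z x * push_const z).
Proof.
apply: (pfinite_le p1r _ (pfiniteZ p1r (push_const z) pfinite_indic_ball)).
  by apply: measurable_funM => //; exact: measurable_push_weight.
move=> x; rewrite !normrM mulrC ler_wpM2l //.
rewrite ger0_norm; last by case/andP: (push_weight_ge0_le1 z x).
exact: le_trans (push_weight_le_indic z x) (ler_norm _).
Qed.

Lemma pfinite_push_fun z : pfinite mu p (push_fun z).
Proof.
have -> : push_fun z = fun x =>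
    (g z x - push_weight z x * g z x) + push_weight z x * push_const z.
  by apply: funext => x; rewrite /push_fun; ring.
apply: (pfiniteD p1r _ (pfinite_weight_const z)).
exact: (pfiniteB p1r (pfinite_g z) (pfinite_weight_g z)).
Qed.

Definition push_of (z : Lp) : Lp := Lp_of p1 (pfinite_push_fun z).

Lemma pnormr_weight_const z : nr (fun x => push_weight z x * push_const z) <= eps z / 4.
Proof.
apply: le_trans (le_pnormr p1r (pfinite_weight_const z).1
  (pfiniteZ p1r (push_const z) pfinite_indic_ball) _) _.
  move=> x; rewrite !normrM mulrC ler_wpM2l //.
  rewrite ger0_norm; last by case/andP: (push_weight_ge0_le1 z x).
  exact: le_trans (push_weight_le_indic z x) (ler_norm _).
rewrite (pnormrZ p1r _ pfinite_indic_ball) ger0_norm; last first.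
  exact: ltW (push_const_gt0 z).
have := push_scale_ball_norm; have := eps_gt0 z; have := ball_norm_ge0.
rewrite /push_const /ball_norm; nra.
Qed.

Lemma pnormr_weight_g z : nr (fun x => push_weight z x * g z x) < eps z / 2.
Proof.
have eps2 : 0 < eps z / 2 by rewrite divr_gt0.
pose P n := (0 < n)%N && (tail_norm n z < eps z / 2).
have [|M /andP[M0 MP] Mmin] := ex_minnP (P := P).
  have [N hN] := pnormr_ball_seq_small p1r dist_metric lam_gt0 measurable_mball a_null
    (pfinite_g z) eps2.
  exists N.+1; rewrite /P ltn0Sn /= /tail_norm; apply: le_lt_trans hN.
  exact: (pnormr_ball_seq_decr p1r lam_gt0 measurable_mball (pfinite_g z) (leqnSn N)).
apply: le_lt_trans MP.
apply: (le_pnormr p1r (pfinite_weight_g z).1 (pfinite_mul_indic p1r (mB M) (pfinite_g z))).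
move=> x; have [->|/push_weight_neq0[x0 xB xtail]] := eqVneq (push_weight z x) 0.
  by rewrite mul0r normr0.
have Mx : (M <= shell x)%N by apply: Mmin; rewrite /P x0 xtail.
rewrite /indic (_ : x \in B M); last exact/mem_set/(ball_seq_subset lam_gt0 Mx xB).
rewrite mulr1 normrM ler_piMl //; have /andP[w0 w1] := push_weight_ge0_le1 z x.
by rewrite ger0_norm.
Qed.

Lemma Lpdist_push_of z : dLp (g z) (push_of z) < eps z.
Proof.
rewrite (Lpdist_ae
  (h := fun x => push_weight z x * g z x - push_weight z x * push_const z)).
- apply: le_lt_trans (pnormrB_leD p1r (pfinite_weight_g z) (pfinite_weight_const z)) _.
  by have := pnormr_weight_g z; have := pnormr_weight_const z; have := eps_gt0 z; lra.
- exact: (pfiniteB p1r (pfinite_weight_g z) (pfinite_weight_const z)).1.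
- by apply: filterS (Lp_of_ae p1 (pfinite_push_fun z)) => x ->; rewrite /push_fun; ring.
Qed.

Lemma push_fun_near_a z : exists2 N, (0 < N)%N &
  forall x, B N x -> x <> a -> push_fun z x = push_const z.
Proof.
have eps4 : 0 < eps z / 4 by rewrite divr_gt0.
have [N hN] := pnormr_ball_seq_small p1r dist_metric lam_gt0 measurable_mball a_null
  (pfinite_g z) eps4.
exists N.+1 => // x xN xa.
have Nx := shell_index_ge dist_metric lam_gt0 (ltn0Sn N) xN xa.
have tail_small : tail_norm (shell x) z < eps z / 4.
  apply: le_lt_trans hN.
  exact: (pnormr_ball_seq_decr p1r lam_gt0 measurable_mball (pfinite_g z) (ltnW Nx)).
suff w1 : push_weight z x = 1 by rewrite /push_fun w1 subrr !mul0r mul1r add0r.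
rewrite /push_weight; case E : shell Nx => [//|n] _; rewrite -E; apply: clamp01_ge1.
have := eps_gt0 z; move: tail_small; rewrite ltr_pdivlMr // => tail_small e0.
rewrite lerBrDl -lerBlDl; have : 4 * tail_norm (shell x) z / eps z < 1.
  by rewrite ltr_pdivrMr // mul1r; lra.
lra.
Qed.

Lemma push_of_not_ae0 z r : (forall s, 0 < s -> (0 < mu (mball dist a s))%E) -> 0 < r ->
  ~ {ae mu, forall x, mball dist a r x -> (push_of z : X -> R) x = 0}.
Proof.
move=> mu_mball_gt0 r0 F0; have [N N0 hN] := push_fun_near_a z.
pose s := Num.min r (lam / N.+1%:R).
have s0 : 0 < s by rewrite lt_min r0 divr_gt0.
suff /(negligibleP _ (measurable_mball s0)) mu_s : mu.-negligible (mball dist a s).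
  by have := mu_mball_gt0 _ s0; rewrite mu_s ltxx.
have F_ae : {ae mu, forall x, (mball dist a r x -> (push_of z : X -> R) x = 0) /\
    (push_of z : X -> R) x = push_fun z x}.
  by apply: filterS2 F0 (Lp_of_ae p1 (pfinite_push_fun z)) => x.
apply: (negligibleS (A := (~` [set x | (mball dist a r x -> (push_of z : X -> R) x = 0) /\
    (push_of z : X -> R) x = push_fun z x]) `|` [set a])); last first.
  by apply: negligibleU; [exact: F_ae | apply/negligibleP; case: a_null].
move=> x xs; have [->|xa] := pselect (x = a); [by right | left => -[Fr0 Fx]].
have xr : mball dist a r x by apply: lt_le_trans xs _; rewrite ge_min lexx.
have xN : B N x by apply: lt_le_trans xs _; rewrite ge_min lexx orbT.
by have := Fr0 xr; rewrite Fx hN //; apply/eqP; rewrite gt_eqF ?push_const_gt0.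
Qed.

Lemma pnormr_g_lip z z' : nr (g z') <= nr (g z) + dLp (g z) (g z').
Proof.
have -> : (g z' : X -> R) = (fun x => (g z' x - g z x) + g z x).
  by apply: funext => x; rewrite subrK.
apply: le_trans (pnormrD p1r (pfiniteB p1r (pfinite_g z') (pfinite_g z)) (pfinite_g z)) _.
by rewrite addrC lerD2l Lpdist_sym.
Qed.

Lemma tail_norm_le n z : tail_norm n z <= nr (g z).
Proof.
apply: (le_pnormr p1r (pfinite_mul_indic p1r (mB n) (pfinite_g z)).1 (pfinite_g z)).
exact: norm_mul_indic_le.
Qed.

Lemma dist_tail_norm n z z' : `|tail_norm n z - tail_norm n z'| <= dLp (g z) (g z').
Proof.
suff tail_lip u v : tail_norm n u <= dLp (g u) (g v) + tail_norm n v.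
  have := tail_lip z z'; have := tail_lip z' z; rewrite Lpdist_sym ler_norml => *.
  by apply/andP; split; lra.
have guv := pfiniteB p1r (pfinite_g u) (pfinite_g v).
rewrite /tail_norm; have -> : (fun x => g u x * \1_(B n) x) =
    (fun x => (g u x - g v x) * \1_(B n) x + g v x * \1_(B n) x).
  by apply: funext => x; ring.
apply: le_trans (pnormrD p1r (pfinite_mul_indic p1r (mB n) guv)
  (pfinite_mul_indic p1r (mB n) (pfinite_g v))) _.
rewrite lerD2r; apply: (le_pnormr p1r (pfinite_mul_indic p1r (mB n) guv).1 guv).
exact: (norm_mul_indic_le (fun x => g u x - g v x)).
Qed.

Definition push_kappa (z z' : Lp) : R := 4 * (dLp (g z) (g z') / eps z +
  nr (g z') * `|eps z - eps z'| / (eps z * eps z')).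

Lemma push_kappa_ge0 z z' : 0 <= push_kappa z z'.
Proof.
have e0 := eps_gt0 z; have e0' := eps_gt0 z'.
by rewrite mulr_ge0 // addr_ge0 ?divr_ge0 ?mulr_ge0 ?Lpdist_ge0 ?pnormr_ge0 // ltW.
Qed.

Lemma dist_push_weight z z' x :
  `|push_weight z x - push_weight z' x| <= push_kappa z z' * \1_(B 0) x.
Proof.
rewrite /push_weight; case E : shell => [|n].
  by rewrite subrr normr0 mulr_ge0 ?push_kappa_ge0 // /indic; case: (_ \in _).
have := @shell_indexP _ _ _ dist a lam x; rewrite E => /(_ isT) [xB _].
rewrite /indic (_ : x \in B 0) ?mulr1; last first.
  exact/mem_set/(ball_seq_subset lam_gt0 (leq0n _) xB).
apply: le_trans (clamp01_lip _ _) _.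
have -> : (2 - 4 * tail_norm n.+1 z / eps z) - (2 - 4 * tail_norm n.+1 z' / eps z') =
    4 * (tail_norm n.+1 z' / eps z' - tail_norm n.+1 z / eps z) by ring.
rewrite normrM ger0_norm // ler_wpM2l // distrC.
apply: le_trans (ler_distB_div _ (eps_gt0 z) (eps_gt0 z') (pnormr_ge0 _)) _.
apply: lerD; first by rewrite ler_wpM2r ?invr_ge0 ?(ltW (eps_gt0 z)) ?dist_tail_norm.
rewrite -!mulrA ler_wpM2r ?tail_norm_le //.
by rewrite mulr_ge0 ?invr_ge0 ?mulr_ge0 // ltW.
Qed.

Lemma dist_push_fun z z' x : `|push_fun z x - push_fun z' x| <=
  `|g z x - g z' x| +
  (push_kappa z z' * push_const z + push_scale * `|eps z - eps z'|) * \1_(B 0) x +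
  push_kappa z z' * `|g z x|.
Proof.
have /andP[w0 w1] := push_weight_ge0_le1 z' x.
have i0 : 0 <= \1_(B 0) x :> R by rewrite /indic; case: (_ \in _).
have i1 : \1_(B 0) x <= 1 :> R by rewrite /indic; case: (_ \in _).
have k0 := push_kappa_ge0 z z'; have c0 := ltW (push_const_gt0 z).
have -> : push_fun z x - push_fun z' x =
    (g z x - g z' x) * (1 - push_weight z' x) +
    (push_weight z x - push_weight z' x) * (push_const z - g z x) +
    push_weight z' x * (push_scale * (eps z - eps z')).
  by rewrite /push_fun /push_const; ring.
have diff_bound : `|(g z x - g z' x) * (1 - push_weight z' x)| <= `|g z x - g z' x|.
  by rewrite normrM ler_piMr // ger0_norm ?subr_ge0 // lerBlDr lerDl.
have weight_bound : `|(push_weight z x - push_weight z' x) * (push_const z - g z x)| <=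
    push_kappa z z' * push_const z * \1_(B 0) x + push_kappa z z' * `|g z x|.
  rewrite normrM; apply: le_trans (_ : _ <= push_kappa z z' * \1_(B 0) x *
      (push_const z + `|g z x|)) _.
    apply: ler_pM => //; first exact: dist_push_weight.
    by apply: le_trans (ler_normB _ _) _; rewrite ger0_norm.
  rewrite mulrDr mulrAC lerD2l -mulrA ler_wpM2l // ler_piMl //.
have const_bound : `|push_weight z' x * (push_scale * (eps z - eps z'))| <=
    push_scale * `|eps z - eps z'| * \1_(B 0) x.
  rewrite normrM mulrC normrM ger0_norm ?(ltW push_scale_gt0) //.
  by rewrite ler_wpM2l ?mulr_ge0 ?(ltW push_scale_gt0) // ger0_norm ?push_weight_le_indic.
have := ler_normD ((g z x - g z' x) * (1 - push_weight z' x) +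
  (push_weight z x - push_weight z' x) * (push_const z - g z x))
  (push_weight z' x * (push_scale * (eps z - eps z'))).
have := ler_normD ((g z x - g z' x) * (1 - push_weight z' x))
  ((push_weight z x - push_weight z' x) * (push_const z - g z x)).
lra.
Qed.

Lemma Lpdist_push_of_le z z' : dLp (push_of z) (push_of z') <=
  dLp (g z) (g z') +
  (push_kappa z z' * push_const z + push_scale * `|eps z - eps z'|) * ball_norm +
  push_kappa z z' * nr (g z).
Proof.
set K := _ + push_scale * _; set k := push_kappa z z'.
have fF := pfiniteB p1r (pfinite_push_fun z) (pfinite_push_fun z').
rewrite (Lpdist_ae (h := fun x => push_fun z x - push_fun z' x)); first last.
- apply: filterS2 (Lp_of_ae p1 (pfinite_push_fun z)) (Lp_of_ae p1 (pfinite_push_fun z'));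
  by move=> x -> ->.
- exact: fF.1.
have fdg := pfinite_abs p1r (pfiniteB p1r (pfinite_g z) (pfinite_g z')).
have fK := pfiniteZ p1r K pfinite_indic_ball.
have fk := pfiniteZ p1r k (pfinite_abs p1r (pfinite_g z)).
have f12 := pfiniteD p1r fdg fK.
apply: le_trans (le_pnormr p1r fF.1 (pfiniteD p1r f12 fk) _) _.
  move=> x; apply: le_trans (dist_push_fun z z' x) _.
  by rewrite [K * _]mulrC; exact: ler_norm.
apply: le_trans (pnormrD p1r f12 fk) _.
rewrite (pnormrZ p1r _ (pfinite_abs p1r (pfinite_g z))).
have k0 : 0 <= k := push_kappa_ge0 z z'.
rewrite pnormr_abs ger0_norm // lerD2r.
apply: le_trans (pnormrD p1r fdg fK) _.
rewrite pnormr_abs (pnormrZ p1r _ pfinite_indic_ball) ger0_norm //.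
have c0 := ltW (push_const_gt0 z); have s0 := ltW push_scale_gt0.
by rewrite /K addr_ge0 // mulr_ge0.
Qed.

Lemma push_kappa_le z z' :
  dLp (g z) (g z') + `|eps z - eps z'| < Num.min 1 (eps z / 2) ->
  push_kappa z z' <= 4 * ((eps z)^-1 + (nr (g z) + 1) * (2 * (eps z)^-1 * (eps z)^-1)) *
                     (dLp (g z) (g z') + `|eps z - eps z'|).
Proof.
rewrite lt_min => /andP[lt1 lt2].
have e0 := eps_gt0 z; have e'0 := eps_gt0 z'.
have sg0 := Lpdist_ge0 (g z) (g z'); have u0 := normr_ge0 (eps z - eps z').
have nG := pnormr_g_lip z z'; have nG0 := pnormr_ge0 (g z').
have e'e : eps z / 2 <= eps z' by have := ler_norm (eps z - eps z'); lra.
have ie'2 : (eps z')^-1 <= 2 * (eps z)^-1.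
  have : (eps z')^-1 <= (eps z / 2)^-1 by rewrite lef_pV2 ?posrE ?divr_gt0.
  by rewrite invfM invrK mulrC.
set sg := dLp _ _ in lt1 lt2 sg0 nG *; set u := `|_| in lt1 lt2 u0 e'e *.
set s := sg + u; set ie := (eps z)^-1 in ie'2 *; set K := nr (g z) + 1.
have ie0 : 0 <= ie by rewrite invr_ge0 ltW.
rewrite /push_kappa -/sg -/u -/ie.
rewrite (_ : _ * s = 4 * (ie * s + K * (2 * ie * ie) * s)); last by rewrite /s; ring.
rewrite ler_pM2l //; apply: lerD; first by rewrite mulrC ler_wpM2l // lerDl.
rewrite invfM -/ie (_ : K * (2 * ie * ie) * s = (K * s) * (ie * (2 * ie))); last by ring.
apply: ler_pM; rewrite ?mulr_ge0 ?invr_ge0 ?(ltW e0) ?(ltW e'0) //.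
- by apply: ler_pM => //; rewrite /s /K; lra.
- by rewrite ler_wpM2l.
Qed.

Lemma mcontinuous_push_of : mcontinuous dLp g -> rcontinuous dLp eps ->
  mcontinuous dLp push_of.
Proof.
move=> gc epsc.
apply: (mcontinuous_modulus (s := fun z z' => dLp (g z) (g z') + `|eps z - eps z'|)).
- by move=> z z'; rewrite addr_ge0 ?Lpdist_ge0.
- move=> z e e0; have e2 : 0 < e / 2 by rewrite divr_gt0.
  have [d1 d10 h1] := gc z _ e2; have [d2 d20 h2] := epsc z _ e2.
  exists (Num.min d1 d2) => [|z']; first by rewrite lt_min d10 d20.
  by rewrite lt_min => /andP[/h1 ? /h2 ?]; lra.
move=> z; exists (Num.min 1 (eps z / 2)); first by rewrite lt_min ltr01 divr_gt0.
pose C1 := 4 * ((eps z)^-1 + (nr (g z) + 1) * (2 * (eps z)^-1 * (eps z)^-1)).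
exists (1 + C1 * (push_const z * ball_norm + nr (g z)) + push_scale * ball_norm).
move=> z' hs; apply: le_trans (Lpdist_push_of_le z z') _.
have := push_kappa_le hs; rewrite -/C1.
set sg := dLp _ _; set u := `|_|; set k := push_kappa z z' => hk.
have sg0 : 0 <= sg := Lpdist_ge0 _ _; have u0 : 0 <= u := normr_ge0 _.
have c0 := ltW (push_const_gt0 z); have s0 := ltW push_scale_gt0.
have n0 := ball_norm_ge0; have nG0 := pnormr_ge0 (g z).
have cN0 : 0 <= push_const z * ball_norm + nr (g z) by rewrite addr_ge0 // mulr_ge0.
have := ler_wpM2r cN0 hk.
have : 0 <= push_scale * ball_norm * sg by rewrite !mulr_ge0.
lra.
Qed.

End push_off.

Lemma Lp_push_off {d} {X : measurableType d} {R : realType}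
    {mu : {measure set X -> \bar R}} {p : R} (p1 : (1 <= p%:E)%E)
    (dist : X -> X -> R) (a : X) (lam : R) :
  is_metric dist -> measurable [set a] /\ mu [set a] = 0%E ->
  (forall r, 0 < r -> measurable (mball dist a r) /\ (0 < mu (mball dist a r))%E) ->
  0 < lam -> (mu (mball dist a lam) < +oo)%E ->
  forall (g : LspaceType mu p1 -> LspaceType mu p1) (eps : LspaceType mu p1 -> R),
  mcontinuous (@Lpdist _ _ _ mu p p1) g -> (forall z, 0 < eps z) ->
  rcontinuous (@Lpdist _ _ _ mu p p1) eps ->
  exists2 F : LspaceType mu p1 -> LspaceType mu p1,
    mcontinuous (@Lpdist _ _ _ mu p p1) F &
    forall z, Lpdist (g z) (F z) < eps z /\
      forall r, 0 < r -> ~ {ae mu, forall x, mball dist a r x -> (F z : X -> R) x = 0}.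
Proof.
move=> dist_metric a_null mball_pos lam_gt0 mball_finite g eps gc eps_gt0 epsc.
have measurable_mball r (r0 : 0 < r) := (mball_pos r r0).1.
exists (push_of measurable_mball lam_gt0 mball_finite g eps_gt0).
  exact: mcontinuous_push_of.
move=> z; split; first exact: Lpdist_push_of.
by move=> r r0; apply: push_of_not_ae0 => // s /mball_pos[].
Qed.

Unset Implicit Arguments.

Theorem mainTheorem5 (dT : measure_display) (X : measurableType dT) (R : realType)
  (dist : X -> X -> R) (mu : {measure set X -> \bar R})
  (p : R) (p1 : (1 <= p%:E)%E)
  (a : X)
  (A B : set (LspaceType mu p1)) (xi : LspaceType mu p1 -> R) :
  is_metric dist ->
  a \in X0 mu ->
  (forall lam : R, 0 < lam ->
     measurable (mball dist a lam) /\ (0 < mu (mball dist a lam))%E) ->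
  (exists2 lam' : R, 0 < lam' & (mu (mball dist a lam') < +oo)%E) ->
  (forall f, A f -> 0 < xi f) ->
  (forall f, A f ->
     {ae mu, forall x, mball dist a (xi f) x -> (f : X -> R) x = 0}) ->
  Zset (@Lpdist _ _ _ mu p p1) B ->
  mclosed (@Lpdist _ _ _ mu p p1) (A `|` B) ->
  Zset (@Lpdist _ _ _ mu p p1) (A `|` B).
Proof.
move=> dist_metric /set_mem a_null mball_pos [lam lam_gt0 mball_finite] xi_gt0 A_vanish.
move=> BZ ABcl.
apply: (Zset_setU (@Lpdist_ge0 _ _ _ mu p p1) (@Lpdist_sym _ _ _ mu p p1)
  (@Lpdist_triangle _ _ _ mu p p1) (@Lpdist_refl _ _ _ mu p p1) BZ ABcl).
move=> g eps gc eps_gt0 epsc.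
have [F Fc hF] :=
  Lp_push_off dist_metric a_null mball_pos lam_gt0 mball_finite gc eps_gt0 epsc.
exists F => // z; have [gF F_not0] := hF z; split => // Az.
exact: F_not0 _ (xi_gt0 _ Az) (A_vanish _ Az).
Qed.
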